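(* Let $K$ be an admissible kernel on $X\times Y$ with constant $C_K$ and let $\mu_0$ be a Borel probability measure on $Y$. The following are equivalent: (1) the function $U_K^{\mu_0}$ is constant on $X$; (2) $U_K^{\mu_0}(x)=C_K$ for every $x\in X$; (3) $\mu_0$ minimizes $\sup_{x\in X}U_K^{\mu}(x)$ over Borel probability measures $\mu$ on $Y$, i.e. $\inf_{\mu\in\mathcal{M}(Y)}\sup_{x\in X}U_K^\mu(x)=\sup_{x\in X}U_K^{\mu_0}(x)$.
   Context: $(X,d_X)$ and $(Y,d_Y)$ are compact metric spaces and $G$ is a compact topological group acting isometrically and transitively on both $X$ and $Y$. $\mathcal{M}(Y)$ is the set of Borel probability measures on $Y$; $m_X$ and $m_Y$ denote the unique $G$-invariant Radon (Borel) probability measures on $X$ and $Y$. A Borel measurable $K:X\times Y\to\mathbb{R}\cup\{-\infty\}$ is an admissible kernel if: (i) there is $B_K\in[0,\infty)$ with $-\infty\le K(x,y)\le B_K$ for all $x,y$; (ii) $\int_X|K(x,y)|\,dm_X(x)<\infty$ for every $y\in Y$; (iii) for every $y$, $K(\cdot,y)$ is upper semi-continuous; (iv) $K(g(x),y)=K(x,g^{-1}(y))$ for all $g\in G,x\in X,y\in Y$. The constant $C_K$ is the common value of $\int_X K(x,y)\,dm_X(x)$ (independent of $y$). For $\mu\in\mathcal{M}(Y)$, $U_K^\mu(x)=\int_Y K(x,y)\,d\mu(y)$. *)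

From HB Require Import structures.
From mathcomp Require Import all_boot all_order all_algebra.
From mathcomp Require Import all_classical all_reals all_analysis.
From mathcomp Require Import measurable_realfun.
Set Implicit Arguments. Unset Strict Implicit. Unset Printing Implicit Defensive.
Import Order.TTheory GRing.Theory Num.Theory.
Local Open Scope classical_set_scope.
Local Open Scope ring_scope.
Local Open Scope ereal_scope.

Definition Borel (T : ptopologicalType) : Type := g_sigma_algebraType (@open T).
HB.instance Definition _ (T : ptopologicalType) := Measurable.on (Borel T).
Notation BorelOf T := (Borel T).

(* d is a metric on the pseudometric space X inducing its uniform structure
   (this is exactly the content of mathcomp-analysis' PseudoMetric_isMetric mixin;
   we use a pointed pseudometric type, i.e. X is nonempty, so that the Borel
   sigma-algebra is a measurableType) *)
Definition is_metric_of (R : realType) (X : pseudoPMetricType R) (d : X -> X -> R) :=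
  [/\ (forall x y, 0 <= d x y)%R, (forall x y, d x y = 0%R -> x = y) &
      (forall x (e : R), ball x e = [set y | (d x y < e)%R])].

Definition usc (T : topologicalType) (R : realType) (f : T -> \bar R) :=
  forall a : \bar R, open [set x | f x < a].

Definition compact_topological_group (G : topologicalType)
  (mul : G -> G -> G) (inv : G -> G) (one : G) : Prop :=
  [/\ (forall a b c, mul a (mul b c) = mul (mul a b) c),
      (forall a, mul one a = a /\ mul a one = a),
      (forall a, mul (inv a) a = one /\ mul a (inv a) = one),
      continuous (fun p : G * G => mul p.1 p.2) &
      [/\ continuous inv, compact [set: G] & hausdorff_space G]].

Definition isometric_transitive_action (R : realType) (G : topologicalType)
  (mul : G -> G -> G) (one : G) (X : pseudoPMetricType R) (d : X -> X -> R)
  (act : G -> X -> X) : Prop :=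
  [/\ (forall x, act one x = x),
      (forall g h x, act (mul g h) x = act g (act h x)),
      continuous (fun p : G * X => act p.1 p.2),
      (forall g x x', d (act g x) (act g x') = d x x') &
      (forall x x', exists g, act g x = x')].

Definition G_invariant (R : realType) (G : Type) (X : pseudoPMetricType R)
  (act : G -> X -> X) (m : probability (BorelOf X) R) : Prop :=
  forall (g : G) (A : set (BorelOf X)), measurable A ->
    m (act g @^-1` A) = m A.

Definition admissible_kernel (R : realType) (G : Type) (inv : G -> G)
  (X Y : pseudoPMetricType R) (actX : G -> X -> X) (actY : G -> Y -> Y)
  (mX : probability (BorelOf X) R) (K : X -> Y -> \bar R) : Prop :=
  [/\ measurable_fun [set: BorelOf X * BorelOf Y]
        (fun p : BorelOf X * BorelOf Y => K p.1 p.2),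
      (exists BK : R, (0 <= BK)%R /\ forall x y, K x y <= BK%:E),
      (forall y, \int[mX]_(x in [set: BorelOf X]) `|K x y| < +oo),
      (forall y, usc (fun x : X => K x y)) &
      (forall g x y, K (actX g x) y = K x (actY (inv g) y))].

Definition potential (R : realType) (X Y : pseudoPMetricType R) (K : X -> Y -> \bar R)
  (mu : probability (BorelOf Y) R) (x : X) : \bar R :=
  \int[mu]_(y in [set: BorelOf Y]) K x y.

(* Shifting K by its bound b gives the nonnegative kernel b - K, so by Tonelli the
   gap b - U_K^mu has mX-average b - C_K for every mu.  Hence sup_x U_K^mu >= C_K
   for every mu, and a constant potential can only be the constant C_K.  The
   invariant measure mY has constant potential because K is G-equivariant, so the
   minimax value is exactly C_K.  Conversely, if sup_x U_K^mu0 = C_K, the gap of mu0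
   is everywhere at least its average.  It is lower semicontinuous (Fatou, from the
   upper semicontinuity of K), so exceeding the average at one point would mean
   exceeding it on a nonempty open set, which has positive mX-measure because
   finitely many of its translates cover the compact homogeneous space X. *)

From HB Require Import structures.
From mathcomp Require Import all_boot all_order all_algebra.
From mathcomp Require Import all_classical all_reals all_analysis.
From mathcomp Require Import measurable_realfun.
From mathcomp Require Import lra.
Set Implicit Arguments.
Unset Strict Implicit.
Unset Printing Implicit Defensive.
Import Order.TTheory GRing.Theory Num.Theory.
Local Open Scope classical_set_scope.
Local Open Scope ring_scope.
Local Open Scope ereal_scope.

Lemma lte_EFin_dense (R : realType) (x y : \bar R) :
  x < y -> exists r : R, x < r%:E < y.
Proof.
case: x => [a| |]; case: y => [c| |] //=.
- rewrite lte_fin => ac; exists ((a + c) / 2)%R; rewrite !lte_fin.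
  by have [-> ->] := midf_lt ac.
- by move=> _; exists (a + 1)%R; rewrite !lte_fin ltry andbT; lra.
- by move=> _; exists (c - 1)%R; rewrite !lte_fin ltNyr /=; lra.
- by move=> _; exists 0%R; rewrite ltNyr ltry.
Qed.

Lemma lte_EFinB (R : realType) (b r : R) (k : \bar R) : k <= b%:E ->
  (r%:E < b%:E - k) = (k < (b - r)%:E).
Proof.
case: k => [s| |] //= _; last by rewrite ltry ltNyr.
by rewrite !lte_fin; apply/idP/idP; lra.
Qed.

Lemma EFin_subeI (R : realType) (b : R) (p q : \bar R) :
  b%:E - p = b%:E - q -> p = q.
Proof. by case: p => [s| |]; case: q => [s'| |] //= [] ?; congr EFin; lra. Qed.

Lemma integral_cst_probability (R : realType) d (T : measurableType d)
    (P : probability T R) (r : \bar R) :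
  \int[P]_(t in setT) cst r t = r.
Proof.
rewrite integral_cst //.
by transitivity (r * 1); [congr (_ * _); exact: probability_setT | exact: mule1].
Qed.

Lemma integral_cstB_probability (R : realType) d (T : measurableType d)
    (P : probability T R) (g : T -> \bar R) (b : R) :
  measurable_fun setT g -> (forall t, g t <= b%:E) -> (0 <= b)%R ->
  \int[P]_(t in setT) (b%:E - g t) = b%:E - \int[P]_(t in setT) g t.
Proof.
move=> mg gb b0.
have gpb t : g^\+ t <= b%:E by rewrite funeposE ge_max gb lee_fin b0.
have gp_fin t : g^\+ t \is a fin_num.
  by rewrite ge0_fin_numE ?funepos_ge0 // (le_lt_trans (gpb t)) ?ltry.
have mgp := measurable_funepos mg.
have mgn := measurable_funeneg mg.
have bgp0 t : 0 <= b%:E - g^\+ t by rewrite subre_ge0.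
have mbgp : measurable_fun setT (fun t => b%:E - g^\+ t).
  by apply: emeasurable_funB => //; exact: measurable_cst.
have splitB t : b%:E - g t = (b%:E - g^\+ t) + g^\- t.
  by rewrite {1}(funeposneg g) oppeB ?addeA //; exact: fin_num_adde_defr.
have int_b : \int[P]_(t in setT) (b%:E - g^\+ t) + \int[P]_(t in setT) g^\+ t = b%:E.
  rewrite -ge0_integralD //.
  under eq_integral => t _ do rewrite subeK ?gp_fin //.
  exact: integral_cst_probability.
have int_gp_fin : \int[P]_(t in setT) g^\+ t \is a fin_num.
  rewrite ge0_fin_numE; last by apply: integral_ge0 => t _; exact: funepos_ge0.
  rewrite (le_lt_trans _ (ltry b)) // -int_b leeDr //.
  by apply: integral_ge0 => t _; exact: bgp0.
under eq_integral do rewrite splitB.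
rewrite ge0_integralD //.
have -> : \int[P]_(t in setT) (b%:E - g^\+ t) = b%:E - \int[P]_(t in setT) g^\+ t.
  by rewrite -[in RHS]int_b addeK.
rewrite (integralE P setT g) oppeB ?addeA //.
exact: fin_num_adde_defr.
Qed.

Lemma lt_cst_integral (R : realType) d (T : measurableType d)
    (P : probability T R) (f : T -> \bar R) (O : set T) (a t : R) :
  measurable_fun setT f -> measurable O -> (0 <= a)%R -> (a < t)%R ->
  (forall x, a%:E <= f x) -> (forall x, O x -> t%:E <= f x) -> 0 < P O ->
  a%:E < \int[P]_(x in setT) f x.
Proof.
move=> mf mO a0 at_ af tf PO.
pose k := (t - a)%R; have k0 : (0 < k)%R by rewrite subr_gt0.
have mind : measurable_fun setT (fun x => (\1_O x : R)%:E).
  by apply/measurable_EFinP; exact: measurable_indic.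
have ind0 x : 0 <= (\1_O x)%:E by rewrite lee_fin indicE; case: (_ \in _).
have int_step : \int[P]_(x in setT) (a%:E + k%:E * (\1_O x)%:E) = a%:E + k%:E * P O.
  rewrite ge0_integralD //; last 2 first.
  - by move=> x _; rewrite mule_ge0 // lee_fin ltW.
  - exact: emeasurable_funM.
  rewrite integral_cst_probability ge0_integralZl_EFin ?ltW //.
  by rewrite integral_indic // setIT.
apply: (lt_le_trans (y := a%:E + k%:E * P O)).
  by rewrite lteDl // mule_gt0 // lte_fin.
rewrite -int_step; apply: ge0_le_integral => //.
- by move=> x _; rewrite adde_ge0 ?mule_ge0 // lee_fin ?ltW.
- by apply: emeasurable_funD => //; exact: emeasurable_funM.
- move=> x _; rewrite indicE; case: (boolP (x \in O)) => [/set_mem Ox|_] /=.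
    by rewrite mule1 -EFinD /k addrC subrK tf.
  by rewrite mule0 adde0 af.
Qed.

Lemma ereal_sup_range_cst (R : realType) (T : pointedType) (f : T -> \bar R)
    (a : \bar R) :
  (forall x, f x = a) -> ereal_sup (range f) = a.
Proof. by move=> fa; rewrite (_ : f = cst a) ?ereal_sup_cst ?setT0 //; exact/funext. Qed.

Lemma limn_einf_ge_near (R : realType) (u : (\bar R)^nat) (r : \bar R) :
  (\forall n \near \oo, r <= u n) -> r <= limn_einf u.
Proof.
move=> [N _ ruN]; rewrite limn_einf_lim; apply: lime_ge; first exact: is_cvg_einfs.
exists N => // M /= NM; apply: le_ereal_inf_tmp => _ [k /= Mk <-].
exact/ruN/(leq_trans NM Mk).
Qed.

Lemma limn_einf_le (R : realType) (u : (\bar R)^nat) (r : \bar R) :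
  (forall n, u n <= r) -> limn_einf u <= r.
Proof.
move=> ur; rewrite limn_einf_lim; apply: lime_le; first exact: is_cvg_einfs.
by apply: nearW => n; apply: ge_ereal_inf; exists (u n) => //; exists n => /=.
Qed.

Lemma measurable_fun_limn_einf (R : realType) d (T : measurableType d) (D : set T)
    (f : (T -> \bar R)^nat) :
  (forall n, measurable_fun D (f n)) ->
  measurable_fun D (fun x => limn_einf (f ^~ x)).
Proof.
move=> mf; have mNf n : measurable_fun D (-%E \o f n).
  exact: measurableT_comp (@oppe_measurable R setT) (mf n).
have := measurableT_comp (@oppe_measurable R setT) (measurable_fun_limn_esup mNf).
by apply: eq_measurable_fun => x _ /=; rewrite (limn_esupN (f ^~ x)) oppeK.
Qed.

Lemma open_measurable_Borel (T : ptopologicalType) (O : set T) :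
  open O -> measurable (O : set (BorelOf T)).
Proof. exact: sub_gen_smallest. Qed.

Lemma continuous_measurable_Borel (T U : ptopologicalType) (f : T -> U) :
  continuous f -> measurable_fun [set: BorelOf T] (f : BorelOf T -> BorelOf U).
Proof.
move=> cf.
apply: (@measurability _ _ _ _ setT (f : BorelOf T -> BorelOf U) (@open U)) => //.
move=> _ [A oA <-]; rewrite setTI; apply: open_measurable_Borel.
by apply: open_comp => // x _; exact: cf.
Qed.

Section kernel_potential.
Variables (R : realType) (X Y : pseudoPMetricType R).
Variables (mX : probability (BorelOf X) R) (K : X -> Y -> \bar R) (b c : R).
Hypothesis mK : measurable_fun [set: BorelOf X * BorelOf Y]
  (fun p : BorelOf X * BorelOf Y => K p.1 p.2).
Hypothesis Kb : forall x y, K x y <= b%:E.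
Hypothesis b0 : (0 <= b)%R.
Hypothesis KC : forall y, \int[mX]_(x in [set: BorelOf X]) K x y = c%:E.

Lemma measurable_kernel_fst (y : Y) :
  measurable_fun [set: BorelOf X] (fun x : BorelOf X => K x y).
Proof.
by have := measurableT_comp mK (pair2_measurable (T1 := BorelOf X) (T2 := BorelOf Y) y).
Qed.

Lemma measurable_kernel_snd (x : X) :
  measurable_fun [set: BorelOf Y] (fun y : BorelOf Y => K x y).
Proof.
by have := measurableT_comp mK (pair1_measurable (T1 := BorelOf X) (T2 := BorelOf Y) x).
Qed.

Lemma kernel_gap_ge0 x y : 0 <= b%:E - K x y.
Proof. by rewrite subre_ge0. Qed.

Lemma integral_kernel_gap (mu : probability (BorelOf Y) R) (x : X) :
  \int[mu]_(y in [set: BorelOf Y]) (b%:E - K x y) = b%:E - potential K mu x.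
Proof. by rewrite integral_cstB_probability //; exact: measurable_kernel_snd. Qed.

Lemma potential_le_bound (mu : probability (BorelOf Y) R) (x : X) :
  potential K mu x <= b%:E.
Proof.
rewrite -subre_ge0 // -integral_kernel_gap.
by apply: integral_ge0 => y _; exact: kernel_gap_ge0.
Qed.

Let measurable_gap : measurable_fun setT
  (fun p : BorelOf X * BorelOf Y => b%:E - K p.1 p.2).
Proof. by apply: emeasurable_funB => //; exact: measurable_cst. Qed.

Let gap_ge0 (p : BorelOf X * BorelOf Y) : 0 <= b%:E - K p.1 p.2.
Proof. exact: kernel_gap_ge0. Qed.

Lemma measurable_potential_gap (mu : probability (BorelOf Y) R) :
  measurable_fun [set: BorelOf X] (fun x => b%:E - potential K mu x).
Proof.
have := measurable_fun_fubini_tonelli_F (m2 := mu) _ measurable_gap gap_ge0.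
by apply: eq_measurable_fun => x _; rewrite /fubini_F integral_kernel_gap.
Qed.

Lemma integral_potential_gap (mu : probability (BorelOf Y) R) :
  \int[mX]_(x in [set: BorelOf X]) (b%:E - potential K mu x) = (b - c)%:E.
Proof.
under eq_integral do rewrite -integral_kernel_gap.
rewrite (fubini_tonelli _ measurable_gap gap_ge0) /=.
rewrite -(integral_cst_probability mu (b - c)%:E); apply: eq_integral => y _.
by rewrite integral_cstB_probability ?KC //; exact: measurable_kernel_fst.
Qed.

Lemma kernel_constant_le_bound : (c <= b)%R.
Proof.
suff : 0 <= b%:E - c%:E by rewrite subre_ge0 // lee_fin.
rewrite -(KC point) -integral_cstB_probability //; last exact: measurable_kernel_fst.
by apply: integral_ge0 => x _; exact: kernel_gap_ge0.
Qed.

Lemma constant_potential_value (mu : probability (BorelOf Y) R) (a : \bar R) :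
  (forall x, potential K mu x = a) -> a = c%:E.
Proof.
move=> Ua; have := integral_potential_gap mu.
under eq_integral do rewrite Ua.
rewrite (integral_cst_probability _ (b%:E - a)).
by case: a {Ua} => [s| |] //= [] ?; congr EFin; lra.
Qed.

Lemma potential_sup_ge (mu : probability (BorelOf Y) R) :
  c%:E <= ereal_sup (range (potential K mu)).
Proof.
rewrite leNgt; apply/negP => /lte_EFin_dense[r /andP[supr]].
rewrite lte_fin => rc; have cb := kernel_constant_le_bound.
have Ur x : potential K mu x <= r%:E.
  by apply: le_trans (ltW supr); apply: ereal_sup_ubound; exists x.
have : (b - r)%:E <= (b - c)%:E.
  rewrite -(integral_potential_gap mu) -(integral_cst_probability mX (b - r)%:E).
  apply: ge0_le_integral => //.
  - by move=> x _; rewrite lee_fin subr_ge0; lra.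
  - exact: measurable_potential_gap.
  - by move=> x _; rewrite /= EFinB leeB.
by rewrite lee_fin; lra.
Qed.

Lemma minimax_potential_value (nu : probability (BorelOf Y) R) :
  (forall x, potential K nu x = c%:E) ->
  ereal_inf [set ereal_sup (range (potential K mu)) |
               mu in [set: probability (BorelOf Y) R]] = c%:E.
Proof.
move=> nu_c; apply/eqP; rewrite eq_le; apply/andP; split.
  by apply: ge_ereal_inf; exists c%:E => //; exists nu => //; exact: ereal_sup_range_cst.
by apply: le_ereal_inf_tmp => _ [mu _ <-]; exact: potential_sup_ge.
Qed.

Hypothesis uK : forall y, usc (fun x : X => K x y).

Lemma kernel_gap_le_liminf (u : nat -> X) (x0 : X) (y : Y) :
  u @ \oo --> x0 -> b%:E - K x0 y <= limn_einf (fun n => b%:E - K (u n) y).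
Proof.
move=> ux0; rewrite leNgt; apply/negP => /lte_EFin_dense[r /andP[liminf_r r_gap]].
have Kx0 : nbhs x0 [set x | K x y < (b - r)%:E].
  by apply: open_nbhs_nbhs; split; [exact: uK | rewrite /= -lte_EFinB ?Kb].
have : r%:E <= limn_einf (fun n => b%:E - K (u n) y).
  apply: limn_einf_ge_near; near=> n.
  have Kun : K (u n) y < (b - r)%:E by near: n; exact (ux0 _ Kx0).
  by rewrite ltW // lte_EFinB.
by rewrite leNgt liminf_r.
Unshelve. all: by end_near.
Qed.

Lemma potential_gap_le_liminf (mu : probability (BorelOf Y) R) (u : nat -> X)
    (x0 : X) :
  u @ \oo --> x0 ->
  b%:E - potential K mu x0 <= limn_einf (fun n => b%:E - potential K mu (u n)).
Proof.
move=> ux0; have mgap x : measurable_fun [set: BorelOf Y] (fun y => b%:E - K x y).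
  by apply: emeasurable_funB => //; exact: measurable_kernel_snd.
have -> : (fun n => b%:E - potential K mu (u n)) =
    fun n => \int[mu]_(y in [set: BorelOf Y]) (b%:E - K (u n) y).
  by apply/funext => n; rewrite integral_kernel_gap.
rewrite -integral_kernel_gap.
apply: le_trans (fatou mu measurableT (fun n => mgap (u n))
  (fun n y _ => kernel_gap_ge0 (u n) y)).
apply: ge0_le_integral => //.
- by move=> y _; exact: kernel_gap_ge0.
- exact: measurable_fun_limn_einf.
- by move=> y _; exact: kernel_gap_le_liminf.
Qed.

Lemma lower_semicontinuous_potential_gap (mu : probability (BorelOf Y) R) :
  lower_semicontinuous (fun x => b%:E - potential K mu x).
Proof.
move=> x0 t t_gap; apply: contrapT => no_nbhs.
have ball_bad n : exists z, ball x0 n.+1%:R^-1 z /\ b%:E - potential K mu z <= t%:E.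
  apply: contrapT => none; apply: no_nbhs; exists (ball x0 n.+1%:R^-1).
    by apply: nbhsx_ballx; rewrite invr_gt0.
  by move=> z x0z; rewrite ltNge; apply/negP => zt; apply: none; exists z.
have [u uP] := choice ball_bad.
have ux0 : u @ \oo --> x0.
  apply/cvg_ballP => e e0.
  apply: filterS (near_infty_natSinv_lt (PosNum e0)) => n /= ne.
  by apply: le_ball (uP n).1; exact: ltW.
have := le_trans (potential_gap_le_liminf mu ux0) (limn_einf_le (fun n => (uP n).2)).
by rewrite leNgt t_gap.
Qed.

Hypothesis mX_open_gt0 : forall O : set X, open O -> O !=set0 -> 0 < mX O.

(* The gap [b - U] is at least its average [b - c] everywhere; by lower
   semicontinuity it would exceed it on an open, hence non-null, set around any
   point where it does. *)
Lemma potential_le_const_eq (mu : probability (BorelOf Y) R) :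
  (forall x, potential K mu x <= c%:E) -> forall x, potential K mu x = c%:E.
Proof.
move=> Uc x; apply/eqP; rewrite eq_le Uc /= leNgt; apply/negP => Ux_lt.
have : (b - c)%:E < b%:E - potential K mu x.
  rewrite lte_EFinB ?potential_le_bound //.
  by have -> : (b - (b - c) = c)%R by lra.
move=> /lte_EFin_dense[t /andP[ct t_gap]].
pose O := [set z : X | t%:E < b%:E - potential K mu z].
have oO : open O.
  exact: (lower_semicontinuousP _).1 (@lower_semicontinuous_potential_gap mu) t.
suff : (b - c)%:E < (b - c)%:E by rewrite ltxx.
rewrite -[X in _ < X](integral_potential_gap mu).
apply: (lt_cst_integral (t := t) (measurable_potential_gap mu)
  (open_measurable_Borel oO)).
- by rewrite subr_ge0 kernel_constant_le_bound.
- by rewrite -lte_fin.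
- by move=> z; rewrite EFinB leeB.
- by move=> z /ltW.
- by apply: mX_open_gt0 => //; exists x.
Qed.
End kernel_potential.

Section invariant_measure.
Variables (R : realType) (X : pseudoPMetricType R) (G : topologicalType).
Variables (actX : G -> X -> X) (mX : probability (BorelOf X) R).
Hypothesis actX_cont : continuous (fun p : G * X => actX p.1 p.2).
Hypothesis actX_tr : forall x x', exists g, actX g x = x'.
Hypothesis mX_inv : G_invariant actX mX.

(* The translates of [O] cover [X]; finitely many of them suffice, and each has the
   measure of [O]. *)
Lemma G_invariant_open_gt0 (O : set X) :
  compact [set: X] -> open O -> O !=set0 -> 0 < mX O.
Proof.
move=> cX oO [x0 Ox0]; rewrite lt0e measure_ge0 andbT; apply/negP => /eqP O0.
have translate_open g : open (actX g @^-1` O).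
  by apply: open_comp => // y _; exact: (continuous_curry actX_cont).2.
have translate_measurable g : measurable (actX g @^-1` O : set (BorelOf X)).
  exact: open_measurable_Borel (translate_open g).
have translate_null g : mX (actX g @^-1` O) = 0.
  by rewrite mX_inv ?O0 //; exact: open_measurable_Borel.
move: cX; rewrite compact_cover => /(_ G setT (fun g => actX g @^-1` O)) [].
- by move=> g _; exact: translate_open.
- by move=> x _; have [g gx] := actX_tr x x0; exists g => //; rewrite /preimage /= gx.
move=> D _ cover.
have finite_null (s : seq G) :
    mX (\big[setU/set0]_(g <- s) (actX g @^-1` O) : set (BorelOf X)) = 0.
  elim: s => [|g s IH]; first by rewrite big_nil measure0.
  rewrite big_cons measureU0 //; last exact: bigsetU_measurable.
  exact: translate_null.
have : mX [set: BorelOf X] <= 0.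
  rewrite -(finite_null (finmap.enum_fset D)) -bigcup_fset.
  apply: le_measure => //; rewrite ?inE //.
  by rewrite bigcup_fset; exact: bigsetU_measurable.
by rewrite probability_setT lee_fin ler10.
Qed.

Variables (Y : pseudoPMetricType R) (actY : G -> Y -> Y) (inv : G -> G).
Variables (mY : probability (BorelOf Y) R) (K : X -> Y -> \bar R) (b : R).
Hypothesis actY_cont : continuous (fun p : G * Y => actY p.1 p.2).
Hypothesis mY_inv : G_invariant actY mY.
Hypothesis mK : measurable_fun [set: BorelOf X * BorelOf Y]
  (fun p : BorelOf X * BorelOf Y => K p.1 p.2).
Hypothesis Kb : forall x y, K x y <= b%:E.
Hypothesis b0 : (0 <= b)%R.
Hypothesis K_inv : forall g x y, K (actX g x) y = K x (actY (inv g) y).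

Lemma G_invariant_potential_act (g : G) (x : X) :
  potential K mY (actX g x) = potential K mY x.
Proof.
apply: (@EFin_subeI _ b); rewrite -!integral_kernel_gap //.
under eq_integral do rewrite K_inv.
pose phi : BorelOf Y -> BorelOf Y := actY (inv g).
have mphi : measurable_fun [set: BorelOf Y] phi.
  exact: continuous_measurable_Borel ((continuous_curry actY_cont).2 (inv g)).
have mgap : measurable_fun [set: BorelOf Y] (fun y => b%:E - K x y).
  by apply: emeasurable_funB => //; exact: measurable_kernel_snd.
have := ge0_integral_pushforward mphi mY measurableT mgap
  (fun y _ => kernel_gap_ge0 Kb x y).
rewrite preimage_setT => <-; apply: eq_measure_integral => A mA _.
exact: mY_inv.
Qed.

Lemma G_invariant_potential_const (x x' : X) :
  potential K mY x = potential K mY x'.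
Proof. by have [g <-] := actX_tr x' x; exact: G_invariant_potential_act. Qed.
End invariant_measure.

Theorem theorem4p7 (R : realType) (X Y : pseudoPMetricType R)
  (dX : X -> X -> R) (dY : Y -> Y -> R) (G : topologicalType)
  (mul : G -> G -> G) (inv : G -> G) (one : G)
  (actX : G -> X -> X) (actY : G -> Y -> Y)
  (mX : probability (BorelOf X) R) (mY : probability (BorelOf Y) R)
  (K : X -> Y -> \bar R) (CK : \bar R) (mu0 : probability (BorelOf Y) R) :
  is_metric_of dX -> is_metric_of dY ->
  compact [set: X] -> compact [set: Y] ->
  compact_topological_group mul inv one ->
  isometric_transitive_action mul one dX actX ->
  isometric_transitive_action mul one dY actY ->
  G_invariant actX mX -> G_invariant actY mY ->
  admissible_kernel inv actX actY mX K ->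
  (forall y : Y, \int[mX]_(x in [set: BorelOf X]) K x y = CK) ->
  ((exists c : \bar R, forall x : X, potential K mu0 x = c) <->
     (forall x : X, potential K mu0 x = CK)) /\
  ((forall x : X, potential K mu0 x = CK) <->
     ereal_inf [set ereal_sup (range (potential K mu)) |
                  mu in [set: probability (BorelOf Y) R]]
     = ereal_sup (range (potential K mu0))).
Proof.
move=> _ _ cX _ _ [_ _ actX_cont _ actX_tr] [_ _ actY_cont _ _] mX_inv mY_inv
  [mK [b [b0 Kb]] K_int uK K_inv] KCK.
have [c CKc] : exists c : R, CK = c%:E.
  apply/EFin_fin_numP; rewrite -(KCK point); apply: integrable_fin_num => //.
  by apply/integrableP; split; [exact: measurable_kernel_fst | exact: K_int].
subst CK.
have const_c := constant_potential_value mK Kb b0 KCK.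
have mY_const := G_invariant_potential_const actX_tr actY_cont mY_inv mK Kb b0 K_inv.
have mY_c x : potential K mY x = c%:E.
  by rewrite (mY_const x point); apply: const_c => x'; exact: mY_const.
rewrite (minimax_potential_value mK Kb b0 KCK mY_c); split.
  by split=> [[a Ua] x | U_c]; [rewrite Ua; exact: const_c Ua | exists c%:E].
split=> [U_c | sup_c]; first by rewrite (ereal_sup_range_cst U_c).
apply: (potential_le_const_eq mK Kb b0 KCK uK).
  by move=> O; exact: G_invariant_open_gt0 actX_cont actX_tr mX_inv O cX.
by move=> x; rewrite sup_c; apply: ereal_sup_ubound; exists x.
Qed.
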